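(* Let $X$ be a real Banach space and let $x, y \in X$ be non-zero. Then the following are equivalent: (i) there exist $\lambda > 0$ and $r > 0$ such that the open ball $B(\lambda x, r) = \{ z \in X : \|\lambda x - z\| < r\}$ contains $y$ but does not contain the zero vector; (ii) $\rho'_{-}(x, y) > 0$.
   Context: For $x, y$ in a real normed space $X$, the norm derivatives are $\rho'_{+}(x,y) = \lim_{t \to 0^+} \|x\| \frac{\|x+ty\| - \|x\|}{t}$ and $\rho'_{-}(x,y) = \lim_{t \to 0^-} \|x\| \frac{\|x+ty\| - \|x\|}{t}$. Balls are open balls. *)

From HB Require Import structures.
From mathcomp Require Import all_boot all_order all_algebra.
From mathcomp Require Import all_classical all_reals all_analysis.
Set Implicit Arguments. Unset Strict Implicit. Unset Printing Implicit Defensive.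
Import Order.TTheory GRing.Theory Num.Theory.
Import numFieldNormedType.Exports.
Local Open Scope classical_set_scope.
Local Open Scope ring_scope.

(* Left norm derivative:
   rho'_-(x,y) = lim_{t -> 0^-} ||x|| (||x + t y|| - ||x||) / t.
   (The limit always exists in a real normed space by convexity of the norm.) *)
Definition norm_deriv_minus (R : realType) (X : normedModType R) (x y : X) : R :=
  lim ((fun t : R => `|x| * ((`|x + t *: y| - `|x|) / t)) @ 0^'-).

(* The difference quotient t |-> (|x + t y| - |x|) / t of the convex function
   t |-> |x + t y| is nondecreasing, and on t < 0 it is bounded by |y|.  Hence
   rho'_-(x, y) is |x| times its supremum over t < 0, and rho'_-(x, y) > 0 iff
   |x + t y| < |x| for some t < 0.  Writing t = -1/lambda, this says
   |lambda x - y| < |lambda x|, i.e. the ball B(lambda x, |lambda x|) contains y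
   but not 0; conversely, a ball around lambda x missing 0 has radius at most
   |lambda x|. *)

From mathcomp Require Import all_boot all_order all_algebra.
From mathcomp Require Import all_classical all_reals all_analysis.
From mathcomp Require Import lra.
Set Implicit Arguments. Unset Strict Implicit. Unset Printing Implicit Defensive.
Import Order.TTheory GRing.Theory Num.Theory.
Import numFieldNormedType.Exports.
Local Open Scope classical_set_scope.
Local Open Scope ring_scope.

Section NormQuotient.
Variables (R : realFieldType) (X : normedModType R) (x y : X).

Definition norm_quotient (t : R) : R := (`|x + t *: y| - `|x|) / t.

Lemma le_norm_quotient s u :
  s <= u -> u < 0 -> norm_quotient s <= norm_quotient u.
Proof.
rewrite le_eqVlt => /predU1P[-> //|lt_su] u_lt0.
have s_lt0 : s < 0 by apply: lt_trans lt_su u_lt0.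
set th := u / s.
have th_gt0 : 0 < th by rewrite nmulr_rgt0 ?invr_lt0.
have th_le1 : th <= 1 by rewrite ler_ndivrMr // mul1r ltW.
have convex : x + u *: y = th *: (x + s *: y) + (1 - th) *: x.
  rewrite scalerDr scalerA mulfVK ?ltr0_neq0 // scalerBl scale1r.
  by rewrite addrAC addrCA subrr addr0.
have le_th : `|x + u *: y| - `|x| <= th * (`|x + s *: y| - `|x|).
  suff : `|x + u *: y| <= th * `|x + s *: y| + (1 - th) * `|x| by lra.
  rewrite convex; apply: (le_trans (ler_normD _ _)).
  have th_compl_ge0 : 0 <= 1 - th by rewrite subr_ge0.
  by rewrite (normrZ th) (normrZ (1 - th)) (ger0_norm (ltW th_gt0))
             (ger0_norm th_compl_ge0).
rewrite /norm_quotient ler_ndivlMr // (le_trans le_th) // /th.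
by rewrite mulrC [u / s]mulrC mulrA.
Qed.

Lemma norm_quotient_le_norm t : t < 0 -> norm_quotient t <= `|y|.
Proof.
move=> t_lt0; rewrite /norm_quotient ler_ndivrMr // mulrC.
have := ler_normD (x + t *: y) (- (t *: y)).
rewrite addrK normrN normrZ ltr0_norm // mulNr; lra.
Qed.

Lemma norm_quotient_gt0 t :
  t < 0 -> (0 < norm_quotient t) = (`|x + t *: y| < `|x|).
Proof. by move=> t_lt0; rewrite nmulr_lgt0 ?invr_lt0 // subr_lt0. Qed.

End NormQuotient.

Section MonotoneLeftLimit.
Variables (R : realType) (f : R -> R) (a M : R).
Hypothesis f_nd : {in `]-oo, a[ &, {homo f : s u / s <= u}}.
Hypothesis f_ub : forall t, t < a -> f t <= M.

Lemma nondecreasing_cvg_at_left : cvg (f t @[t --> a^'-]).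
Proof.
apply: nondecreasing_at_left_is_cvgr; apply: nearW => z.
  by apply: sub_in2 f_nd => t; rewrite !in_itv /= => /andP[].
by exists M => _ [t + <-]; rewrite /= in_itv /= => /andP[_ /f_ub].
Qed.

Lemma le_lim_at_left s : s < a -> f s <= lim (f t @[t --> a^'-]).
Proof.
move=> s_lt_a; apply: limr_ge; first exact: nondecreasing_cvg_at_left.
near=> t; apply: f_nd; rewrite ?in_itv //=.
by apply: ltW; near: t; exact: nbhs_left_gt.
Unshelve. all: by end_near. Qed.

Lemma lt_lim_at_leftP (c : R) :
  c < lim (f t @[t --> a^'-]) <-> exists2 s, s < a & c < f s.
Proof.
split => [c_lt_lim|[s s_lt_a c_lt_fs]]; last first.
  exact: lt_le_trans c_lt_fs (le_lim_at_left s_lt_a).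
have near_gt := cvgr_gt _ nondecreasing_cvg_at_left _ c_lt_lim.
have [s [s_lt_a c_lt_fs]] : exists s, s < a /\ c < f s.
  apply: (@filter_ex R (a^'-)).
  by near=> t; split; near: t; [exact: nbhs_left_lt|exact: near_gt].
by exists s.
Unshelve. all: by end_near. Qed.

End MonotoneLeftLimit.

Lemma norm_deriv_minus_gt0P (R : realType) (X : normedModType R) (x y : X) :
  x != 0 -> 0 < norm_deriv_minus x y <-> exists2 s, s < 0 & `|x + s *: y| < `|x|.
Proof.
move=> x_neq0; have x_gt0 : 0 < `|x| by rewrite normr_gt0.
rewrite (@lt_lim_at_leftP _ _ _ (`|x| * `|y|)).
- split=> -[s s_lt0 s_pos]; exists s => //; move: s_pos;
    by rewrite -(norm_quotient_gt0 x y s_lt0)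
               -(pmulr_rgt0 (norm_quotient x y s) x_gt0).
- move=> s u; rewrite !in_itv /= => _ u_lt0 le_su.
  by rewrite ler_wpM2l // le_norm_quotient.
- by move=> t t_lt0; rewrite ler_wpM2l // norm_quotient_le_norm.
Qed.

Lemma ltr_norm_scale_sub (R : numFieldType) (X : normedModType R)
    (x y : X) (l : R) :
  0 < l -> (`|l *: x - y| < `|l *: x|) = (`|x - l^-1 *: y| < `|x|).
Proof.
move=> l_gt0; have -> : l *: x - y = l *: (x - l^-1 *: y).
  by rewrite scalerBr scalerA mulfV ?gt_eqF // scale1r.
by rewrite !normrZ ltr_pM2l // normr_gt0 gt_eqF.
Qed.

Theorem mainTheorem1 (R : realType) (X : completeNormedModType R) (x y : X) :
  x != 0 -> y != 0 ->
  ((exists (lambda r : R), 0 < lambda /\ 0 < r /\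
      `|lambda *: x - y| < r /\ ~ (`|lambda *: x - 0| < r))
   <-> 0 < norm_deriv_minus x y).
Proof.
move=> x_neq0 _; rewrite norm_deriv_minus_gt0P //; split.
- move=> [l [r [l_gt0 [_ [in_ball /negP]]]]]; rewrite subr0 -leNgt => r_le.
  exists (- l^-1); first by rewrite oppr_lt0 invr_gt0.
  by rewrite scaleNr -ltr_norm_scale_sub // (lt_le_trans in_ball).
- move=> [s s_lt0 lt_norm]; pose l := - s^-1.
  have l_gt0 : 0 < l by rewrite oppr_gt0 invr_lt0.
  exists l, `|l *: x|; rewrite subr0 ltxx; split=> //; split.
    by rewrite normr_gt0 scaler_eq0 negb_or gt_eqF.
  by rewrite ltr_norm_scale_sub // invrN invrK scaleNr opprK.
Qed.
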